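(* Let $A$ be a synaptic algebra, $p,q\in P$, and let $c:=(pqp+p^{\perp}q^{\perp}p^{\perp})^{1/2}$ and $s:=(pq^{\perp}p+p^{\perp}qp^{\perp})^{1/2}$ be the cosine and sine effects of $q$ with respect to $p$. The following are mutually equivalent: (i) $pCq$; (ii) $pqp^{\perp}+p^{\perp}qp=0$; (iii) $q=c^2p+s^2p^{\perp}$; (iv) $cs=0$; (v) $c$ and $s$ are projections and $c^{\perp}=s$; (vi) $c,s\in P$, $c^{\perp}=s$, and $q=cp+c^{\perp}p^{\perp}=s^{\perp}p+sp^{\perp}=|p-s|$; (vii) there exists a projection $t\in P$ such that $tCp$ and $q=|p-t|$.
   Context: Synaptic algebra (Foulis): $R$ is a real linear associative algebra with unit $1$, and $A\subseteq R$ is a real linear subspace with $1\in A$. For $a,b\in A$ write $aCb$ iff $ab=ba$; $C(a):=\{b\in A: aCb\}$; $CC(a):=\{b\in A: bCd \text{ for all } d\in C(a)\}$. $A$ is a synaptic algebra with enveloping algebra $R$ iff: (SA1) $A$ is a partially ordered archimedean real linear space with positive cone $A^+$, $1$ is an order unit, $\|\cdot\|$ the order-unit norm; (SA2) $a\in A\Rightarrow a^2\in A^+$; (SA3) $a,b\in A^+\Rightarrow aba\in A^+$; (SA4) if $a\in A$, $b\in A^+$, $aba=0$ then $ab=ba=0$; (SA5) if $a\in A^+$ there is $b\in A^+\cap CC(a)$ with $b^2=a$; (SA6) for $a\in A$ there is $p=p^2\in A$ with $ab=0\Leftrightarrow pb=0$ for all $b\in A$; (SA7) if $1\le a$ there is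 $b\in A$ with $ab=ba=1$; (SA8) if $a,b\in A$, $a_1\le a_2\le\cdots$ are pairwise commuting elements of $C(b)$ with $\|a-a_n\|\to0$, then $a\in C(b)$. $A$ is nondegenerate. Products are computed in $R$. $P:=\{p\in A:p=p^2\}$, $p^{\perp}:=1-p$. For $0\le a$, $a^{1/2}$ is its unique positive square root in $A$; $|a|:=(a^2)^{1/2}$. *)

From HB Require Import structures.
From mathcomp Require Import all_boot all_order all_algebra.
From mathcomp Require Import reals.
From Stdlib Require Import ClassicalEpsilon.
Set Implicit Arguments. Unset Strict Implicit. Unset Printing Implicit Defensive.
Import Order.TTheory GRing.Theory Num.Theory.
Local Open Scope ring_scope.

Section Synaptic.
Variables (R : realType) (E : algType R).
(* A : the subspace A of the enveloping algebra E; Pos : the positive cone A^+ *)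
Variables (A Pos : E -> Prop).

Definition leA (a b : E) : Prop := Pos (b - a).

Definition commA (a b : E) : Prop := a * b = b * a.
Definition CA (a : E) : E -> Prop := fun b => A b /\ commA a b.
Definition CCA (a : E) : E -> Prop :=
  fun b => A b /\ forall d, CA a d -> commA b d.

Record synaptic : Prop := Synaptic {
  sa_add : forall a b, A a -> A b -> A (a + b);
  sa_scale : forall (k : R) a, A a -> A (k *: a);
  sa_one : A 1;
  sa_pos_sub : forall a, Pos a -> A a;
  sa_pos_add : forall a b, Pos a -> Pos b -> Pos (a + b);
  sa_pos_scale : forall (k : R) a, 0 <= k -> Pos a -> Pos (k *: a);
  sa_pos_zero : Pos 0;
  sa_pos_antisym : forall a, Pos a -> Pos (- a) -> a = 0;
  sa_archi : forall a b, A a -> A b ->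
      (forall n : nat, leA (n%:R *: a) b) -> leA a 0;
  sa_unit : forall a, A a -> exists n : nat, leA a (n%:R *: 1);
  sa2 : forall a, A a -> Pos (a * a);
  sa3 : forall a b, Pos a -> Pos b -> Pos (a * b * a);
  sa4 : forall a b, A a -> Pos b -> a * b * a = 0 -> a * b = 0 /\ b * a = 0;
  sa5 : forall a, Pos a -> exists b, Pos b /\ CCA a b /\ b * b = a;
  sa6 : forall a, A a -> exists p, A p /\ p * p = p /\
          forall b, A b -> (a * b = 0 <-> p * b = 0);
  sa7 : forall a, A a -> leA 1 a -> exists b, A b /\ a * b = 1 /\ b * a = 1;
  (* (SA8); ||a - a_n|| -> 0 for the order-unit norm written out:
     for every e > 0, eventually -e1 <= a - a_n <= e1 *)
  sa8 : forall a b (an : nat -> E), A a -> A b ->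
      (forall n, CA b (an n)) ->
      (forall m n, commA (an m) (an n)) ->
      (forall n, leA (an n) (an n.+1)) ->
      (forall e : R, 0 < e -> exists N, forall n, (N <= n)%N ->
          leA (- (e *: 1)) (a - an n) /\ leA (a - an n) (e *: 1)) ->
      CA b a
}.

Definition projA (p : E) : Prop := A p /\ p * p = p.

Definition sqrtA (a : E) : E :=
  epsilon (inhabits 0) (fun b => Pos b /\ b * b = a).

Definition absA (a : E) : E := sqrtA (a * a).

End Synaptic.

From mathcomp Require Import all_boot all_algebra.
From mathcomp Require Import reals.
From Stdlib Require Import ClassicalEpsilon.
Import GRing.Theory.

(* Write p' := 1 - p and split q = pqp + p'qp' + x along p, with off-diagonal
   part x = pqp' + p'qp.  Then c^2 + s^2 = 1 and (c^2)^2 = c^2 - x^2.  In a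
   synaptic algebra x^2 = 0 forces x = 0 (SA4 with b = 1), so c^2 is a
   projection exactly when x = 0, i.e. when p commutes with q; then c = c^2,
   s = s^2 = 1 - c, and p - s = pqp - p'qp' squares to q.  Conversely,
   |p - t| is a square root of (p - t)^2 and so, by SA5, commutes with p
   whenever t does. *)
Local Open Scope ring_scope.
Set Implicit Arguments. Unset Strict Implicit.

Section Corners.
Variable E : pzRingType.
Implicit Types e f a b : E.

Definition blockdiag e a b := e * a * e + (1 - e) * b * (1 - e).
Definition offdiag e f := e * f * (1 - e) + (1 - e) * f * e.
Definition cos2 e f := blockdiag e f (1 - f).
Definition sin2 e f := blockdiag e (1 - f) f.

Lemma peirce_decomp e f : f = blockdiag e f f + offdiag e f.
Proof.
rewrite /blockdiag /offdiag addrACA -!mulrDr subrKC (addrC (1 - e)) subrKC !mulr1.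
by rewrite -mulrDl subrKC mul1r.
Qed.

Lemma offdiag_eq0_blockdiag e f : offdiag e f = 0 <-> f = blockdiag e f f.
Proof.
split=> [od0|fE]; first by rewrite {1}(peirce_decomp e f) od0 addr0.
by apply: (@addrI _ (blockdiag e f f)); rewrite -peirce_decomp addr0.
Qed.

Lemma corner_idem_sqr e f : f * f = f ->
  e * f * e * f * e = e * f * e - e * f * (1 - e) * f * e.
Proof.
move=> f_idem; rewrite -!mulrA mulrBl mul1r mulrBr !mulrA f_idem.
by rewrite mulrBr !mulrA subKr.
Qed.

Lemma idemC e : e * e = e -> (1 - e) * (1 - e) = 1 - e.
Proof. by move=> e_idem; rewrite mulrBl mul1r mulrBr mulr1 e_idem subrr subr0. Qed.

Section Idempotent.
Variable e : E.
Hypothesis e_idem : e * e = e.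

Lemma mul_idemC : e * (1 - e) = 0.
Proof. by rewrite mulrBr mulr1 e_idem subrr. Qed.
Lemma mulC_idem : (1 - e) * e = 0.
Proof. by rewrite mulrBl mul1r e_idem subrr. Qed.

Lemma mul_blockdiag a b : e * blockdiag e a b = e * a * e.
Proof. by rewrite mulrDr !mulrA e_idem mul_idemC !mul0r addr0. Qed.
Lemma blockdiag_mul a b : blockdiag e a b * e = e * a * e.
Proof. by rewrite mulrDl -!mulrA e_idem mulC_idem !mulr0 addr0. Qed.
Lemma blockdiag_mulC a b : blockdiag e a b * (1 - e) = (1 - e) * b * (1 - e).
Proof. by rewrite mulrDl -!mulrA mul_idemC (idemC e_idem) !mulr0 add0r. Qed.

Lemma blockdiag_comm a b : e * blockdiag e a b = blockdiag e a b * e.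
Proof. by rewrite mul_blockdiag blockdiag_mul. Qed.

Lemma offdiag_eq0P f : offdiag e f = 0 <-> e * f = f * e.
Proof.
split=> [od0|fe]; last first.
  by rewrite /offdiag -!mulrA -fe !mulrA fe -mulrA mul_idemC mulC_idem mulr0 mul0r addr0.
have /subr0_eq -> : e * f - e * f * e = 0.
  by rewrite -[RHS](mulr0 e) -od0 mulrDr !mulrA e_idem mul_idemC !mul0r addr0 mulrBr mulr1.
have /subr0_eq <- : f * e - e * f * e = 0.
  rewrite -[RHS](mul0r e) -od0 /offdiag mulrDl -!mulrA e_idem mulC_idem !mulr0 add0r.
  by rewrite mulrBl mul1r.
by [].
Qed.

Lemma cos2_add_sin2 f : cos2 e f + sin2 e f = 1.
Proof.
rewrite /cos2 /sin2 /blockdiag addrACA -!mulrDl -!mulrDr !(addrC _ f) !subrKC.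
by rewrite !mulr1 e_idem (idemC e_idem) subrKC.
Qed.

Lemma sin2E f : sin2 e f = 1 - cos2 e f.
Proof. by apply/eqP; rewrite eq_sym subr_eq addrC cos2_add_sin2. Qed.

Lemma sub_sin2 f : e - sin2 e f = e * f * e - (1 - e) * f * (1 - e).
Proof.
rewrite /sin2 /blockdiag opprD addrA; congr (_ - _).
by rewrite mulrBr mulr1 mulrBl e_idem opprB addrC subrK.
Qed.

Lemma mulr_idemC x : x * e * (1 - e) = 0.
Proof. by rewrite -mulrA mul_idemC mulr0. Qed.
Lemma mulr_Cidem x : x * (1 - e) * e = 0.
Proof. by rewrite -mulrA mulC_idem mulr0. Qed.
Lemma mulr_idem x : x * e * e = x * e.
Proof. by rewrite -mulrA e_idem. Qed.
Lemma mulr_CidemC x : x * (1 - e) * (1 - e) = x * (1 - e).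
Proof. by rewrite -mulrA (idemC e_idem). Qed.

Lemma blockdiag_sqr a b :
  blockdiag e a b * blockdiag e a b = e * a * e * a * e + (1 - e) * b * (1 - e) * b * (1 - e).
Proof. by rewrite {2}/blockdiag mulrDr !mulrA blockdiag_mul blockdiag_mulC. Qed.

Lemma sqr_sub_corners a b :
  (e * a * e - (1 - e) * b * (1 - e)) * (e * a * e - (1 - e) * b * (1 - e)) =
  blockdiag e a b * blockdiag e a b.
Proof.
set X := e * a * e; set Y := (1 - e) * b * (1 - e).
rewrite mulrBl !mulrBr /X /Y !mulrA mulr_idemC mulr_Cidem !mul0r.
by rewrite !mulr_idem !mulr_CidemC blockdiag_sqr subr0 sub0r opprK.
Qed.

Lemma offdiag_sqr f :
  offdiag e f * offdiag e f = e * f * (1 - e) * f * e + (1 - e) * f * e * f * (1 - e).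
Proof.
rewrite /offdiag; set X := e * f * (1 - e); set Y := (1 - e) * f * e.
have -> : (X + Y) * (X + Y) = X * X + X * Y + (Y * X + Y * Y).
  by rewrite mulrDl !mulrDr.
rewrite /X /Y !mulrA mulr_idemC mulr_Cidem !mul0r.
by rewrite mulr_idem mulr_CidemC add0r addr0.
Qed.

Lemma compl_corner_l f : (1 - e) * (1 - f) * e = - ((1 - e) * f * e).
Proof. by rewrite [(1 - e) * (1 - f)]mulrBr mulr1 mulrBl mulC_idem sub0r. Qed.
Lemma compl_corner_r f : e * (1 - f) * (1 - e) = - (e * f * (1 - e)).
Proof. by rewrite [e * (1 - f)]mulrBr mulr1 mulrBl mul_idemC sub0r. Qed.

Lemma compl_corner_sqr f :
  (1 - e) * (1 - f) * e * (1 - f) * (1 - e) = (1 - e) * f * e * f * (1 - e).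
Proof.
have -> : (1 - e) * (1 - f) * e * (1 - f) * (1 - e) =
          (1 - e) * (1 - f) * e * (e * (1 - f) * (1 - e)) by rewrite !mulrA mulr_idem.
by rewrite compl_corner_l compl_corner_r mulrNN !mulrA mulr_idem.
Qed.

Lemma cos2_sqr f : f * f = f ->
  cos2 e f * cos2 e f = cos2 e f - offdiag e f * offdiag e f.
Proof.
move=> f_idem; rewrite blockdiag_sqr corner_idem_sqr //.
have := corner_idem_sqr (1 - e) (idemC f_idem); rewrite subKr compl_corner_sqr => ->.
by rewrite offdiag_sqr /cos2 /blockdiag opprD addrACA.
Qed.

End Idempotent.
End Corners.

Section Synaptic.
Variables (R : realType) (E : algType R) (A Pos : E -> Prop).
Hypothesis HA : synaptic A Pos.

Lemma A_sub a b : A a -> A b -> A (a - b).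
Proof. by move=> Aa Ab; rewrite -scaleN1r; apply: (sa_add HA) => //; apply: (sa_scale HA). Qed.

Lemma Pos_one : Pos 1.
Proof. by rewrite -[1]mulr1; apply: (sa2 HA); exact: (sa_one HA). Qed.

Lemma proj_Pos p : projA A p -> Pos p.
Proof. by case=> Ap pp; rewrite -pp; apply: (sa2 HA). Qed.

Lemma projC p : projA A p -> projA A (1 - p).
Proof. by case=> Ap pp; split; [apply: A_sub => //; exact: (sa_one HA) | exact: idemC]. Qed.

Lemma A_sqr_eq0 x : A x -> x * x = 0 -> x = 0.
Proof.
by move=> Ax xx0; have := sa4 HA Ax Pos_one; rewrite !mulr1 => /(_ xx0) [].
Qed.

Lemma Pos_conj_comm b d : Pos b -> A d -> commA b d -> Pos (d * b * d).
Proof.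
move=> Pb Ad bd; have [r [Pr [[_ rC] rr]]] := sa5 HA Pb.
have rd : commA r d by apply: rC.
rewrite -rr (_ : d * (r * r) * d = r * (d * d) * r).
  by apply: (sa3 HA) => //; apply: (sa2 HA).
by rewrite !mulrA -rd -!mulrA rd.
Qed.

Lemma Pos_add_eq0 a b : Pos a -> Pos b -> a + b = 0 -> a = 0.
Proof. by move=> Pa Pb /addr0_eq ab; apply: (sa_pos_antisym HA) => //; rewrite ab. Qed.

(* For d = x - y: dxd + dyd = (x^2 - y^2)d = 0, so SA4 gives dx = dy = 0. *)
Lemma Pos_sqr_inj_comm x y : Pos x -> Pos y -> commA x y -> x * x = y * y -> x = y.
Proof.
move=> Px Py xy xxyy; apply/eqP; rewrite -subr_eq0; apply/eqP.
have Ad : A (x - y) by apply: A_sub; apply: (sa_pos_sub HA).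
have dxd : Pos ((x - y) * x * (x - y)).
  by apply: Pos_conj_comm; rewrite // /commA mulrBr mulrBl xy.
have dyd : Pos ((x - y) * y * (x - y)).
  by apply: Pos_conj_comm; rewrite // /commA mulrBr mulrBl xy.
have sum0 : (x - y) * x * (x - y) + (x - y) * y * (x - y) = 0.
  have xyxy : (x - y) * (x + y) = 0.
    by rewrite mulrBl !mulrDr xy xxyy [y * x + _]addrC subrr.
  by rewrite -mulrDl -mulrDr xyxy mul0r.
have [dx0 _] := sa4 HA Ad Px (Pos_add_eq0 dxd dyd sum0).
have [dy0 _] := sa4 HA Ad Py (Pos_add_eq0 dyd dxd (etrans (addrC _ _) sum0)).
by apply: A_sqr_eq0 => //; rewrite mulrBr dx0 dy0 subrr.
Qed.

(* The root of x^2 given by SA5 commutes with x and y. *)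
Lemma Pos_sqr_inj x y : Pos x -> Pos y -> x * x = y * y -> x = y.
Proof.
move=> Px Py xxyy; have [b [Pb [[_ bC] bb]]] := sa5 HA (sa2 HA (sa_pos_sub HA Px)).
have bx : commA b x by apply: bC; split; [exact: (sa_pos_sub HA) | rewrite /commA mulrA].
have by_ : commA b y by apply: bC; split; [exact: (sa_pos_sub HA) | rewrite /commA xxyy mulrA].
by rewrite -(Pos_sqr_inj_comm Pb Px bx bb) (Pos_sqr_inj_comm Pb Py by_) // bb.
Qed.

Lemma sqrtA_spec a : Pos a -> Pos (sqrtA Pos a) /\ sqrtA Pos a * sqrtA Pos a = a.
Proof.
move=> Pa; apply: (epsilon_spec (inhabits 0) (fun b => Pos b /\ b * b = a)).
by have [b [Pb [_ bb]]] := sa5 HA Pa; exists b.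
Qed.

Lemma sqrtA_sqr b : Pos b -> sqrtA Pos (b * b) = b.
Proof.
move=> Pb; have [Ps ss] := sqrtA_spec (sa2 HA (sa_pos_sub HA Pb)).
exact: Pos_sqr_inj.
Qed.

Lemma sqrtA_proj e : projA A e -> sqrtA Pos e = e.
Proof. by move=> Pe; rewrite -{1}Pe.2 sqrtA_sqr //; exact: proj_Pos. Qed.

Lemma sqrtA_comm a d : Pos a -> A d -> commA a d -> commA (sqrtA Pos a) d.
Proof.
move=> Pa Ad ad; have [b [Pb [[_ bC] bb]]] := sa5 HA Pa.
by rewrite -bb sqrtA_sqr //; apply: bC.
Qed.

Lemma absA_comm a d : A a -> A d -> commA a d -> commA (absA Pos a) d.
Proof.
move=> Aa Ad ad; apply: sqrtA_comm => //; first exact: (sa2 HA).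
by rewrite /commA -mulrA ad !mulrA ad.
Qed.

Lemma Pos_blockdiag e a b : projA A e -> Pos a -> Pos b -> Pos (blockdiag e a b).
Proof.
move=> Pe Pa Pb; apply: (sa_pos_add HA); apply: (sa3 HA) => //; apply: proj_Pos => //.
exact: projC.
Qed.

Definition cos_effect p q := sqrtA Pos (cos2 p q).
Definition sin_effect p q := sqrtA Pos (sin2 p q).

Section Projections.
Variables p q : E.
Hypotheses (Hp : projA A p) (Hq : projA A q).

Let pp : p * p = p := Hp.2.
Let Pq : Pos q := proj_Pos Hq.
Let Pq' : Pos (1 - q) := proj_Pos (projC Hq).

Lemma Pos_cos2 : Pos (cos2 p q).
Proof. exact: Pos_blockdiag. Qed.
Lemma Pos_sin2 : Pos (sin2 p q).
Proof. exact: Pos_blockdiag. Qed.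

Lemma A_offdiag : A (offdiag p q).
Proof.
have -> : offdiag p q = q - blockdiag p q q by rewrite {2}(peirce_decomp p q) addrC addKr.
by apply: A_sub; [exact: (sa_pos_sub HA) | apply: (sa_pos_sub HA); exact: Pos_blockdiag].
Qed.

Lemma cos2_idem_offdiag : cos2 p q * cos2 p q = cos2 p q -> offdiag p q = 0.
Proof.
move=> cc; apply: A_sqr_eq0 A_offdiag _.
have := cos2_sqr pp Hq.2; rewrite cc => /(congr1 (fun z => cos2 p q - z)).
by rewrite subrr subKr => <-.
Qed.

Lemma cos_effect_sqr : cos_effect p q * cos_effect p q = cos2 p q.
Proof. exact: (sqrtA_spec Pos_cos2).2. Qed.
Lemma sin_effect_sqr : sin_effect p q * sin_effect p q = sin2 p q.
Proof. exact: (sqrtA_spec Pos_sin2).2. Qed.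

Lemma cos_sin_effect_decomp :
  cos_effect p q * cos_effect p q * p + sin_effect p q * sin_effect p q * (1 - p) =
  blockdiag p q q.
Proof. by rewrite cos_effect_sqr sin_effect_sqr blockdiag_mul // blockdiag_mulC. Qed.

Lemma offdiag_eq0_effects : offdiag p q = 0 ->
  [/\ cos_effect p q = cos2 p q, projA A (cos_effect p q)
    & sin_effect p q = 1 - cos_effect p q].
Proof.
move=> od0; have cc : cos2 p q * cos2 p q = cos2 p q.
  by rewrite (cos2_sqr pp Hq.2) od0 mulr0 subr0.
have Pc : projA A (cos2 p q) by split=> //; apply: (sa_pos_sub HA); exact: Pos_cos2.
have cE : cos_effect p q = cos2 p q := sqrtA_proj Pc.
split=> //; first by rewrite cE.
by rewrite /sin_effect sin2E // sqrtA_proj ?cE //; exact: projC.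
Qed.

Lemma cos_sin_effect_eq0 : cos_effect p q * sin_effect p q = 0 -> offdiag p q = 0.
Proof.
move=> cs0; apply: cos2_idem_offdiag; apply/eqP; rewrite eq_sym -subr_eq0.
rewrite -{1}[cos2 p q]mulr1 -mulrBr -sin2E // -[cos2 p q]cos_effect_sqr.
by rewrite -[sin2 p q]sin_effect_sqr mulrA -(mulrA (cos_effect p q)) cs0 mulr0 mul0r.
Qed.

Lemma proj_cos_effect : projA A (cos_effect p q) -> offdiag p q = 0.
Proof.
case=> _ cc; apply: cos2_idem_offdiag.
by rewrite -cos_effect_sqr cc.
Qed.

Lemma sin_effect_comm : commA (sin_effect p q) p.
Proof.
apply: sqrtA_comm Pos_sin2 Hp.1 _.
by rewrite /commA -blockdiag_comm.
Qed.

Lemma offdiag_eq0_cos_decomp : offdiag p q = 0 ->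
  q = cos_effect p q * p + (1 - cos_effect p q) * (1 - p).
Proof.
move=> od0; have [cE _ _] := offdiag_eq0_effects od0.
rewrite cE -sin2E // blockdiag_mul // blockdiag_mulC //.
exact/offdiag_eq0_blockdiag.
Qed.

Lemma offdiag_eq0_abs : offdiag p q = 0 -> absA Pos (p - sin_effect p q) = q.
Proof.
move=> od0; have [cE _ sE] := offdiag_eq0_effects od0.
rewrite /absA sE cE -sin2E // sub_sin2 // sqr_sub_corners //.
by rewrite -(proj1 (offdiag_eq0_blockdiag p q) od0) sqrtA_sqr.
Qed.

End Projections.
End Synaptic.

Theorem corollary5p7 (R : realType) (E : algType R) (A Pos : E -> Prop)
  (HA : synaptic A Pos) (p q : E) (Hp : projA A p) (Hq : projA A q) :
  let c := sqrtA Pos (p * q * p + (1 - p) * (1 - q) * (1 - p)) in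
  let s := sqrtA Pos (p * (1 - q) * p + (1 - p) * q * (1 - p)) in
  [<-> (* (i) *) commA p q;
       (* (ii) *) p * q * (1 - p) + (1 - p) * q * p = 0;
       (* (iii) *) q = c * c * p + s * s * (1 - p);
       (* (iv) *) c * s = 0;
       (* (v) *) projA A c /\ projA A s /\ 1 - c = s;
       (* (vi) *) projA A c /\ projA A s /\ 1 - c = s /\
                  q = c * p + (1 - c) * (1 - p) /\
                  q = (1 - s) * p + s * (1 - p) /\
                  q = absA Pos (p - s);
       (* (vii) *) exists t, projA A t /\ commA t p /\ q = absA Pos (p - t)].
Proof.
move=> c s; rewrite {}/c {}/s -/(cos_effect Pos p q) -/(sin_effect Pos p q).
rewrite -/(offdiag p q); have pp := Hp.2.
have cs_decomp := cos_sin_effect_decomp HA Hp Hq.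
tfae.
- by move/(offdiag_eq0P pp).
- by move/offdiag_eq0_blockdiag; rewrite cs_decomp.
- rewrite cs_decomp => /offdiag_eq0_blockdiag/(offdiag_eq0_effects HA Hp Hq).
  by case=> _ [_ cc] ->; rewrite mul_idemC.
- move/(cos_sin_effect_eq0 HA Hp Hq)/(offdiag_eq0_effects HA Hp Hq) => [_ Pc ->].
  by split=> //; split; [exact: (projC HA Pc) | ].
- case=> Pc [Ps cs]; have od0 := proj_cos_effect HA Hp Hq Pc.
  have qE := offdiag_eq0_cos_decomp HA Hp Hq od0.
  do 4!(split=> //); split; first by rewrite -cs subKr.
  by rewrite (offdiag_eq0_abs HA Hp Hq od0).
- case=> _ [Ps [_ [_ [_ qE]]]]; exists (sin_effect Pos p q).
  by split=> //; split=> //; exact: (sin_effect_comm HA Hp).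
- case=> t [[At _] [tp ->]]; symmetry; have Ap := Hp.1.
  apply: (absA_comm HA) => //; first exact: (A_sub HA Ap At).
  by rewrite /commA mulrBl mulrBr tp.
Qed.
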